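(* Let $\mathcal{G}=(V,\mathcal{E})$ be an $\ell$-uniform hypergraph with $m$ edges and $n$ vertices such that $n\ge3\ell$. Then there is a partition $V=V_1\dot\cup V_2$ with $|V_1|=\lfloor 2n/3\rfloor$ and $|V_2|=\lceil n/3\rceil$ such that at least $m\cdot\ell/2^{\ell+2}$ edges of $\mathcal{E}$ have exactly one vertex in $V_2$. *)

From mathcomp Require Import all_boot.
Set Implicit Arguments. Unset Strict Implicit. Unset Printing Implicit Defensive.

Definition uniform_hypergraph (V : finType) (l : nat) (E : {set {set V}}) : Prop :=
  forall e, e \in E -> #|e| = l.

Definition one_in (V : finType) (E : {set {set V}}) (V2 : {set V}) : nat :=
  #|[set e in E | #|e :&: V2| == 1]|.

From mathcomp Require Import all_boot zify.

Set Implicit Arguments.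
Unset Strict Implicit.
Unset Printing Implicit Defensive.

(* Average over all k-element sets V2, k = (n + 2) / 3.  An edge of size l
   meets V2 in exactly one vertex for at least l * C(n - l, k - 1) of the
   C(n, k) choices (a vertex of the edge plus k - 1 vertices outside it).
   Since n <= 3k we have C(n, k) <= 3 * C(n - 1, k - 1), and each of the next
   l - 1 vertex removals at most halves C(_, k - 1) because k - 1 stays below
   half the remaining ground set; so C(n, k) <= 2^(l+2) * C(n - l, k - 1). *)

Lemma card_setIdE (T : finType) (A P : pred T) :
  #|[set x in A | P x]| = \sum_(x in A) P x.
Proof.
rewrite -sum1dep_card big_mkcondr /=.
by apply: eq_bigr => x _; case: (P x).
Qed.

Lemma exists_ge_average (T : finType) (S : {set T}) (f : T -> nat) :
  S != set0 -> exists2 x, x \in S & \sum_(y in S) f y <= #|S| * f x.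
Proof.
case/set0Pn=> x0 Sx0.
have [x Sx xmax] := @arg_maxnP _ x0 (mem S) f Sx0.
exists x => //; rewrite -sum_nat_const.
by apply: leq_sum => y /xmax.
Qed.

Lemma sum_one_in (V : finType) (E S : {set {set V}}) :
  \sum_(A in S) one_in E A = \sum_(e in E) #|[set A in S | #|e :&: A| == 1]|.
Proof.
under eq_bigr do rewrite /one_in card_setIdE.
by rewrite exchange_big; apply: eq_bigr => e _; rewrite card_setIdE.
Qed.

Section AddOutsidePoint.

Variables (T : finType) (e B : {set T}) (x : T).
Hypotheses (ex : x \in e) (sBe : B \subset ~: e).

Lemma setI_setU1_outside : e :&: (x |: B) = [set x].
Proof.
rewrite setIUr (setIidPr _); last by rewrite sub1set.
move: sBe; rewrite -disjoints_subset disjoint_sym -setI_eq0 => /eqP ->.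
by rewrite setU0.
Qed.

Lemma setDU1_outside : (x |: B) :\: e = B.
Proof.
rewrite setDUl.
have /setDidPl -> : [disjoint B & e] by rewrite disjoints_subset.
by move: ex; rewrite -sub1set -setD_eq0 => /eqP ->; rewrite set0U.
Qed.

End AddOutsidePoint.

Lemma card_draws_meeting_once (V : finType) (e : {set V}) (k : nat) :
  0 < k ->
  #|e| * 'C(#|V| - #|e|, k.-1) <=
  #|[set A in [set A : {set V} | #|A| == k] | #|e :&: A| == 1]|.
Proof.
move=> k_gt0.
pose D := setX e [set B : {set V} | B \subset ~: e & #|B| == k.-1].
have cardD : #|D| = #|e| * 'C(#|V| - #|e|, k.-1).
  by rewrite cardsX cards_draws -(cardsC e) addKn.
have injD : {in D &, injective (fun p => p.1 |: p.2)}.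
  move=> [x B] [y C]; rewrite !inE /= => /andP[ex /andP[sBe _]].
  move=> /andP[ey /andP[sCe _]] eqxB.
  have exy : x = y.
    apply: set1_inj.
    by rewrite -(setI_setU1_outside ex sBe) eqxB setI_setU1_outside.
  rewrite -exy in eqxB *.
  by rewrite -(setDU1_outside ex sBe) eqxB setDU1_outside.
rewrite -cardD -(card_in_imset injD).
apply/subset_leq_card/subsetP => _ /imsetP[[x B] + ->].
rewrite !inE /= => /andP[ex /andP[sBe /eqP cardB]].
have xB : x \notin B by apply: contraL ex => /(subsetP sBe); rewrite inE.
by rewrite cardsU1 xB cardB (setI_setU1_outside ex sBe) cards1 !eqxx; lia.
Qed.

Lemma leq_binS_double M j : 2 * j <= M.+1 -> 'C(M.+1, j) <= 2 * 'C(M, j).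
Proof.
move=> le2jM.
have pos : 0 < M.+1 - j by lia.
rewrite -(leq_pmul2l pos) -[X in X <= _]mul_bin_down /= mulnA.
by apply: leq_mul; lia.
Qed.

Lemma leq_bin_expn2_sub N j t :
  2 * j + t <= N -> 'C(N, j) <= 2 ^ t * 'C(N - t, j).
Proof.
elim: t => [|t IHt] le_N; first by rewrite subn0 mul1n.
apply: leq_trans (IHt _) _; first by lia.
have -> : N - t = (N - t.+1).+1 by lia.
rewrite expnS -mulnA mulnCA leq_pmul2l ?expn_gt0 //.
by apply: leq_binS_double; lia.
Qed.

Lemma leq_bin_pred n k : 0 < k -> n <= 3 * k -> 'C(n, k) <= 3 * 'C(n.-1, k.-1).
Proof.
move=> k_gt0 le_n3k.
rewrite -(leq_pmul2l k_gt0).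
have := mul_bin_diag n k.-1; rewrite prednK // => <-.
by rewrite mulnA; apply: leq_mul => //; lia.
Qed.

Lemma leq_bin_third n k l :
  0 < k -> 0 < l -> n <= 3 * k -> 2 * k + l <= n + 2 ->
  'C(n, k) <= 2 ^ (l + 2) * 'C(n - l, k.-1).
Proof.
move=> k_gt0 l_gt0 le_n3k le_2kl.
apply: leq_trans (leq_bin_pred k_gt0 le_n3k) _.
have -> : n - l = n.-1 - l.-1 by lia.
have le_bin := @leq_bin_expn2_sub n.-1 k.-1 l.-1.
apply: leq_trans (leq_mul (leqnn 3) (le_bin _)) _; first by lia.
have -> : l + 2 = l.-1 + 3 by lia.
by rewrite expnD mulnCA -mulnA; do 2 apply: leq_mul => //.
Qed.

Theorem propositionB1 (V : finType) (l : nat) (E : {set {set V}}) :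
  uniform_hypergraph l E ->
  3 * l <= #|V| ->
  exists V2 : {set V},
    #|~: V2| = (2 * #|V|) %/ 3 /\
    #|V2| = (#|V| + 2) %/ 3 /\
    #|E| * l <= one_in E V2 * 2 ^ (l + 2).
Proof.
move=> unifE le3lV; set n := #|V| in le3lV *; set k := (n + 2) %/ 3.
pose S := [set A : {set V} | #|A| == k].
have cardS : #|S| = 'C(n, k) by rewrite card_draws.
have S_neq0 : S != set0 by rewrite -card_gt0 cardS bin_gt0 /k; lia.
have [A /[!inE] /eqP cardA maxA] := exists_ge_average (one_in E) S_neq0.
exists A; split; first by move: (cardsC A); rewrite cardA -/n /k; lia.
split=> //; have [->|l_gt0] := posnP l; first by rewrite muln0.
have k_gt0 : 0 < k by rewrite /k; lia.
pose c := 'C(n - l, k.-1).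
have c_gt0 : 0 < c by rewrite bin_gt0 /k; lia.
have edge_count : #|E| * (l * c) <= #|S| * one_in E A.
  apply: leq_trans maxA; rewrite sum_one_in -sum_nat_const.
  apply: leq_sum => e Ee; rewrite /c -(unifE e Ee).
  exact: card_draws_meeting_once.
rewrite -(leq_pmul2r c_gt0) -mulnA; apply: leq_trans edge_count _.
rewrite mulnC -mulnA leq_mul2l cardS leq_bin_third ?orbT // /k; lia.
Qed.
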